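(* There is a constant $c > 0$ such that every chordal graph on $n$ vertices has at least $c \cdot 2^n$ perfect elimination orderings; that is, the number of perfect elimination orderings of an $n$-vertex chordal graph is $\Omega(2^n)$.
   Context: A graph is chordal if every cycle of length at least 4 has a chord (an edge joining two non-consecutive vertices of the cycle). A vertex is simplicial if its neighbourhood is a clique. A perfect elimination ordering (PEO) of a graph $G$ is an ordering $(v_1, \ldots, v_n)$ of $V(G)$ such that for each $i$, the set of neighbours of $v_i$ in the subgraph induced by $\{v_i, v_{i+1}, \ldots, v_n\}$ is a clique. *)

From Stdlib Require Export Reals.
From mathcomp Require Import all_boot.
From mathcomp Require Import perm.
Set Implicit Arguments. Unset Strict Implicit. Unset Printing Implicit Defensive.

(* A simple graph on vertex set 'I_n: a symmetric irreflexive relation e. *)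

Definition is_graph_cycle (n : nat) (e : rel 'I_n) (c : seq 'I_n) : Prop :=
  uniq c /\ cycle e c.

Definition cyc_consecutive (k i j : nat) : bool :=
  (j == i.+1) || ((i == 0) && (j == k.-1)).

Definition has_chord (n : nat) (e : rel 'I_n) (c : seq 'I_n) : Prop :=
  exists x y : 'I_n, [/\ x \in c, y \in c, index x c < index y c,
                        ~~ cyc_consecutive (size c) (index x c) (index y c) &
                        e x y].

Definition chordal (n : nat) (e : rel 'I_n) : Prop :=
  forall c : seq 'I_n, is_graph_cycle e c -> 4 <= size c -> has_chord e c.

(* An ordering (v_0, ..., v_{n-1}) of the vertices is encoded by the
   bijection s : 'I_n -> 'I_n, v_i = s i. *)
Definition is_peo (n : nat) (e : rel 'I_n) (s : {perm 'I_n}) : bool :=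
  [forall i : 'I_n, forall j : 'I_n, forall k : 'I_n,
     [&& i < j, i < k, j != k, e (s i) (s j) & e (s i) (s k)] ==> e (s j) (s k)].

Definition num_peo (n : nat) (e : rel 'I_n) : nat :=
  #|[set s : {perm 'I_n} | is_peo e s]|.

(* Dirac's lemma: every induced subgraph of a chordal graph is complete or has
   two non-adjacent simplicial vertices, so any induced subgraph with at least
   two vertices has two distinct simplicial vertices.  Choosing either of them
   as the next vertex to eliminate and recursing on the remaining (still
   chordal) induced subgraph gives at least 2^(n-1) distinct perfect
   elimination orderings.

   For Dirac's lemma, let u be a non-neighbour of a, let C be the component of
   u in the subgraph induced by the non-neighbours of a, and S the vertices
   outside C with a neighbour in C.  Every vertex of S is adjacent to a, and S
   is a clique: two non-adjacent vertices of S, joined through C and through a,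
   would yield (after short-cutting chords) a chordless cycle of length at
   least 4.  Induction on C :|: S, which misses a, then provides a simplicial
   vertex in C, and it stays simplicial in the whole set since all its
   neighbours lie in C :|: S. *)

From Stdlib Require Import Reals Lra.
From mathcomp Require Import all_boot perm zify.
Set Implicit Arguments. Unset Strict Implicit. Unset Printing Implicit Defensive.

Section ChordlessPaths.

Variables (T : eqType) (e : rel T).

Lemma sorted_shortcut x0 (s : seq T) i j : sorted e s -> i < j -> j < size s ->
  e (nth x0 s i) (nth x0 s j) -> sorted e (take i.+1 s ++ drop j s).
Proof.
move=> e_s lt_ij lt_js e_ij.
have e_take := take_sorted i.+1 e_s; have e_drop := drop_sorted j e_s.
rewrite (take_nth x0) ?(ltn_trans lt_ij) // (drop_nth x0) // in e_take e_drop *.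
by rewrite cat_rcons sorted_cat_cons e_take /= e_ij.
Qed.

Definition chordless (s : seq T) : bool :=
  allrel (fun u w => ((index u s).+1 < index w s) ==> ~~ e u w) s s.

Lemma chordless_subpath x p : path e x p -> uniq (x :: p) ->
  exists q, [/\ path e x q, subseq q p, last x q = last x p & chordless (x :: q)].
Proof.
have [k] := ubnP (size p); elim: k p => // k IH p lt_pk e_p u_p.
case cl_p: (chordless (x :: p)); first by exists p.
set t := x :: p in u_p cl_p.
have [u t_u [w t_w]] : exists2 u, u \in t & exists2 w, w \in t &
    (index u t).+1 < index w t /\ e u w.
  move/negbT/allPn: cl_p => [u t_u /allPn[w t_w]].
  rewrite negb_imply negbK => /andP[lt_uw e_uw].
  by exists u => //; exists w.
set i := index u t; set j := index w t; case=> lt_ij e_uw.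
have lt_jt : j < size t by rewrite index_mem.
pose q := take i p ++ drop j t.
have qE : x :: q = take i.+1 t ++ drop j t by [].
have sub_q : subseq (x :: q) t.
  rewrite qE -[X in subseq _ X](cat_take_drop i.+1 t); apply: cat_subseq => //.
  by rewrite -(subnK (ltnW lt_ij)) -drop_drop drop_subseq.
have lt_qk : size q < k.
  by rewrite size_cat size_take size_drop /= in lt_jt *; case: ifP; lia.
have e_q : path e x q.
  rewrite -[path e x q]/(sorted e (x :: q)) qE.
  apply: (sorted_shortcut (x0 := x)) (e_p : sorted e t) (ltnW lt_ij) lt_jt _.
  by rewrite /i /j !nth_index.
have [q' [e_q' sub_q' last_q' cl_q']] := IH q lt_qk e_q (subseq_uniq sub_q u_p).
exists q'; split => //.
- by apply: subseq_trans sub_q' _; move: sub_q; rewrite /= eqxx.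
- rewrite last_q' -[last x p]/(last x t) -[in RHS](cat_take_drop j t).
  by rewrite !last_cat (drop_nth x lt_jt).
Qed.

Lemma index_rcons_in (s : seq T) a v : v \in s -> index v (rcons s a) = index v s.
Proof. by move=> s_v; rewrite -cats1 index_cat s_v. Qed.

Lemma index_rcons_notin (s : seq T) a : a \notin s -> index a (rcons s a) = size s.
Proof. by move=> /negbTE s_a; rewrite -cats1 index_cat s_a /= eqxx addn0. Qed.

End ChordlessPaths.

Section Chordal.

Variable n : nat.
Local Notation T := 'I_n.
Variable e : rel T.
Hypothesis esym : symmetric e.
Hypothesis eirr : irreflexive e.
Hypothesis ech : chordal e.

Lemma chordless_path_closing a x y q :
  path e x q -> last x q = y -> uniq (x :: q) -> chordless e (x :: q) -> x != y ->
  a \notin x :: q -> e a x -> e a y -> {in q, forall z, z != y -> ~~ e a z} ->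
  e x y.
Proof.
move=> e_q last_q u_q cl_q x_ne_y q_a e_ax e_ay far_q.
case e_xy: (e x y) => //.
(* Otherwise [rcons (x :: q) a] is a chordless cycle of length at least 4. *)
have size_q : 1 < size q.
  move: x_ne_y e_xy e_q; rewrite -last_q.
  case: q {u_q cl_q q_a far_q last_q} => [|z [|? ?]] //=; first by rewrite eqxx.
  by move=> _ ->.
set s := x :: q in u_q cl_q q_a.
have cycle_c : is_graph_cycle e (rcons s a).
  split; first by rewrite rcons_uniq q_a u_q.
  by rewrite /s /= !rcons_path last_rcons e_q last_q (esym y) e_ay e_ax.
have size_c : size (rcons s a) = (size q).+2 by rewrite size_rcons.
have long_c : 4 <= size (rcons s a) by rewrite size_c.
have [u [w [c_u c_w lt_uw ncons e_uw]]] := ech cycle_c long_c.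
have index_y : index y s = size q.
  by rewrite -last_q -[last x q]/(last x s) -nth_last index_uniq.
have index_a : index a (rcons s a) = (size q).+1 by rewrite index_rcons_notin.
have index_s v : v \in s -> index v s < (size q).+1 by rewrite -index_mem.
rewrite /cyc_consecutive size_c in ncons.
move: c_u c_w lt_uw ncons e_uw; rewrite !mem_rcons !(in_cons a).
case/predU1P=> [-> | s_u]; case/predU1P=> [-> | s_w].
- by rewrite ltnn.
- by rewrite index_a index_rcons_in // => /(ltn_trans (index_s w s_w)); rewrite ltnn.
- rewrite index_a index_rcons_in // eqxx andbT => _ /norP[/eqP u_ne_y /eqP u_ne_x] e_ua.
  have q_u : u \in q.
    move: s_u; rewrite in_cons => /predU1P[u_x|//].
    by move: u_ne_x; rewrite u_x /s /= eqxx.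
  have u_ne_y' : u != y by apply/eqP => u_y; apply: u_ne_y; rewrite u_y index_y.
  by move: (far_q u q_u u_ne_y'); rewrite esym e_ua.
- rewrite !index_rcons_in // => lt_uw' /norP[ncons _] e_uw.
  have lt : (index u s).+1 < index w s by rewrite ltn_neqAle eq_sym ncons lt_uw'.
  by move/allrelP: cl_q => /(_ u w s_u s_w); rewrite lt e_uw.
Qed.

Lemma common_nbr_path_adj (D : {set T}) a x y p :
  a \notin D -> {in D, forall z, ~~ e a z} -> e a x -> e a y -> x != y ->
  path e x (rcons p y) -> all (mem D) p -> e x y.
Proof.
move=> D_a far_D e_ax e_ay x_ne_y e_p /allP D_p.
have := last_rcons x p y; case: (shortenP e_p) => q e_q u_q sub_q last_q.
have [q' [e_q' sub_q' last_q' cl_q']] := chordless_subpath e_q u_q.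
have u_q' : uniq (x :: q') by apply: subseq_uniq u_q; rewrite /= eqxx.
have D_q' z : z \in q' -> z != y -> z \in D.
  move=> /(mem_subseq sub_q') /sub_q; rewrite mem_rcons in_cons.
  by case/predU1P=> [-> /eqP//|/D_p].
have a_ne_y : a != y by apply: contraTneq e_ay => ->; rewrite eirr.
apply: (chordless_path_closing (a := a) e_q' _ u_q' cl_q') => //.
- by rewrite last_q'.
- rewrite in_cons negb_or (contraTneq _ e_ax) => [|->]; last by rewrite eirr.
  by apply: contraNN D_a => /D_q'; apply.
- by move=> z /D_q' D_z /D_z /far_D.
Qed.

Definition clique (A : {set T}) : bool :=
  [forall x in A, forall y in A, (x != y) ==> e x y].

Definition nbhd_clique (A : {set T}) v : bool :=
  [forall x in A, forall y in A, [&& e v x, e v y & x != y] ==> e x y].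

Definition simplicial (A : {set T}) v : bool := (v \in A) && nbhd_clique A v.

Definition clique_or_simplicial_pair (A : {set T}) : Prop :=
  clique A \/ exists v1 v2,
    [/\ simplicial A v1, simplicial A v2, v1 != v2 & ~~ e v1 v2].

Lemma cliqueP (A : {set T}) : reflect {in A &, forall x y, x != y -> e x y} (clique A).
Proof.
apply: (iffP forall_inP) => [cl x y A_x A_y xy | cl x A_x].
  by move/forall_inP: (cl x A_x) => /(_ y A_y); rewrite xy.
by apply/forall_inP => y A_y; apply/implyP; apply: cl.
Qed.

Lemma nbhd_cliqueP (A : {set T}) v :
  reflect {in A &, forall x y, e v x -> e v y -> x != y -> e x y} (nbhd_clique A v).
Proof.
apply: (iffP forall_inP) => [cl x y A_x A_y vx vy xy | cl x A_x].
  by move/forall_inP: (cl x A_x) => /(_ y A_y); rewrite vx vy xy.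
apply/forall_inP => y A_y; apply/implyP => /and3P[vx vy xy].
exact: cl.
Qed.

Section Separator.

Variables (A : {set T}) (a u : T).
Hypotheses (A_a : a \in A) (A_u : u \in A) (u_ne_a : u != a) (nau : ~~ e a u).

Let D := [set z in A | (z != a) && ~~ e a z].
Let eD := [rel z w | [&& z \in D, w \in D & e z w]].
Let C := [set z | connect eD u z].
Let S := [set s in A | (s \notin C) && [exists c in C, e c s]].

Lemma component_sub : {subset C <= D}.
Proof.
have D_u : u \in D by rewrite inE A_u u_ne_a.
move=> z; rewrite inE => /connectP[q e_q ->]; case/lastP: q e_q => [|q w] //=.
by rewrite rcons_path last_rcons => /andP[_ /and3P[]].
Qed.

Lemma component_closed c z : c \in C -> z \in D -> e c z -> z \in C.
Proof.
move=> C_c D_z e_cz; have D_c := component_sub C_c.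
rewrite inE; apply: (connect_trans (y := c)); first by move: C_c; rewrite inE.
by apply: connect1; rewrite /= D_c D_z.
Qed.

Lemma boundary_adj s : s \in S -> e a s.
Proof.
rewrite inE => /and3P[A_s C'_s /exists_inP[c C_c e_cs]].
have := component_sub C_c; rewrite inE => /and3P[_ c_ne_a nac].
apply: contraNT C'_s => nas; apply: (component_closed C_c _ e_cs).
rewrite inE A_s nas andbT; apply: contraNneq nac => <-.
by rewrite esym.
Qed.

Lemma boundary_clique : clique S.
Proof.
have eD_sym : symmetric eD by move=> z w; rewrite /= esym andbCA.
apply/cliqueP => x y S_x S_y x_ne_y.
have [e_ax e_ay] := (boundary_adj S_x, boundary_adj S_y).
move: S_x S_y; rewrite !inE => /and3P[_ _ /exists_inP[cx C_cx e_cxx]].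
move=> /and3P[_ _ /exists_inP[cy C_cy e_cyy]].
have : connect eD cx cy.
  move: C_cx C_cy; rewrite !inE => C_cx; apply: connect_trans.
  by rewrite (sym_connect_sym eD_sym).
case/connectP => q e_q cy_q.
apply: (@common_nbr_path_adj D a x y (cx :: q)) => //.
- by rewrite inE eqxx andbF.
- by move=> z; rewrite inE => /and3P[].
- rewrite /= rcons_path -cy_q esym e_cxx e_cyy andbT.
  by apply: sub_path e_q => z w /and3P[].
- rewrite /= component_sub //=.
  by elim: q cx e_q {C_cx e_cxx cy_q} => //= w q IH z /andP[/and3P[_ -> _] /IH].
Qed.

Lemma component_simplicial :
  (forall B : {set T}, #|B| < #|A| -> clique_or_simplicial_pair B) ->
  exists v, [/\ simplicial A v, v != a & ~~ e a v].
Proof.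
move=> IH; pose B := C :|: S.
have sub_BA : B \subset A.
  by apply/subsetP => z; rewrite inE => /orP[/component_sub|]; rewrite inE => /andP[].
have B'_a : a \notin B.
  rewrite inE negb_or; apply/andP; split.
    by apply/negP => /component_sub; rewrite inE eqxx andbF.
  by apply/negP => /boundary_adj; rewrite eirr.
have lt_BA : #|B| < #|A| by apply: proper_card; apply/properP; split => //; exists a.
have simplicial_lift v : v \in C -> simplicial B v -> simplicial A v.
  move=> C_v /andP[B_v /nbhd_cliqueP cl_v].
  rewrite /simplicial (subsetP sub_BA v B_v); apply/nbhd_cliqueP => x y A_x A_y vx vy.
  have B_nbhd z : z \in A -> e v z -> z \in B.
    move=> A_z e_vz; rewrite inE; case C_z : (z \in C) => //=.
    by rewrite inE A_z C_z; apply/exists_inP; exists v.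
  exact: cl_v (B_nbhd x A_x vx) (B_nbhd y A_y vy) vx vy.
have [v [C_v sB_v]] : exists v, v \in C /\ simplicial B v.
  case: (IH B lt_BA) => [/cliqueP cl_B | [v1 [v2 [s1 s2 v12 nv12]]]].
    have C_u : u \in C by rewrite inE connect0.
    exists u; split => //; rewrite /simplicial inE C_u /=.
    by apply/nbhd_cliqueP => x y B_x B_y _ _; apply: cl_B.
  case C_v1 : (v1 \in C); first by exists v1.
  case C_v2 : (v2 \in C); first by exists v2.
  move: s1 s2 => /andP[B_v1 _] /andP[B_v2 _].
  move: B_v1 B_v2; rewrite !in_setU C_v1 C_v2 /= => S_v1 S_v2.
  by move/cliqueP: boundary_clique => /(_ v1 v2 S_v1 S_v2 v12); rewrite (negbTE nv12).
have := component_sub C_v; rewrite inE => /and3P[_ v_ne_a nav].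
by exists v; split => //; apply: simplicial_lift.
Qed.

End Separator.

Lemma chordal_clique_or_simplicial_pair (A : {set T}) : clique_or_simplicial_pair A.
Proof.
have [k] := ubnP #|A|; elim: k A => // k IH A lt_Ak.
have IH_A (B : {set T}) : #|B| < #|A| -> clique_or_simplicial_pair B.
  by move=> lt_BA; apply: IH; lia.
have [cl_A|] := boolP (clique A); first by left.
case/forall_inPn=> x A_x /forall_inPn[y A_y]; rewrite negb_imply => /andP[x_ne_y nxy].
have y_ne_x : y != x by rewrite eq_sym.
have [v1 [s1 v1_ne_x nxv1]] := component_simplicial A_x A_y y_ne_x nxy IH_A.
have A_v1 : v1 \in A by case/andP: s1.
have x_ne_v1 : x != v1 by rewrite eq_sym.
have nv1x : ~~ e v1 x by rewrite esym.
have [v2 [s2 v2_ne_v1 nv1v2]] := component_simplicial A_v1 A_x x_ne_v1 nv1x IH_A.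
by right; exists v1, v2; split; rewrite // eq_sym.
Qed.

Lemma two_simplicial (A : {set T}) : 1 < #|A| ->
  exists v1 v2, [/\ simplicial A v1, simplicial A v2 & v1 != v2].
Proof.
case: (chordal_clique_or_simplicial_pair A) => [/cliqueP cl_A | [v1 [v2 [*]]]];
  last by exists v1, v2.
case/card_gt1P => x [y [A_x A_y x_ne_y]]; exists x, y.
by split; rewrite // /simplicial ?A_x ?A_y; apply/nbhd_cliqueP => ? ? ? ? _ _; apply: cl_A.
Qed.

Fixpoint peo_seq (l : seq T) : bool :=
  if l is v :: l' then nbhd_clique [set z in l'] v && peo_seq l' else true.

Lemma peo_seqs_of_card k (A : {set T}) : #|A| = k.+1 ->
  exists L : seq (seq T), [/\ uniq L,
    {in L, forall l, [/\ uniq l, [set z in l] = A & peo_seq l]} & 2 ^ k <= size L].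
Proof.
elim: k A => [|k IH] A card_A.
  have /cards1P[v ->] : #|A| == 1 by rewrite card_A.
  exists [:: [:: v]]; split => // l; rewrite inE => /eqP -> /=.
  split => //; first by apply/setP => z; rewrite !inE.
  by rewrite andbT; apply/nbhd_cliqueP => ? ?; rewrite inE.
have gt1_A : 1 < #|A| by rewrite card_A.
have [v1 [v2 [s1 s2 v12]]] := two_simplicial gt1_A.
have extend v : simplicial A v -> exists L : seq (seq T), [/\ uniq L,
    {in L, forall l, [/\ uniq (v :: l), [set z in v :: l] = A & peo_seq (v :: l)]} &
    2 ^ k <= size L].
  case/andP=> A_v cl_v.
  have card_Av : #|A :\ v| = k.+1 by move: card_A; rewrite (cardsD1 v) A_v => -[].
  have [L [uniq_L peo_L size_L]] := IH _ card_Av.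
  exists L; split => // l /peo_L[uniq_l set_l peo_l].
  have l'_v : v \notin l by apply/negP => l_v; move/setP: set_l => /(_ v); rewrite !inE l_v eqxx.
  split; first by rewrite /= l'_v.
    apply/setP => z; move/setP: set_l => /(_ z); rewrite !inE => ->.
    by case: eqP => [->|].
  rewrite /= peo_l andbT set_l; apply/nbhd_cliqueP => x y; rewrite !inE.
  by move=> /andP[_ A_x] /andP[_ A_y]; move/nbhd_cliqueP: cl_v; apply.
have [L1 [uniq_L1 peo_L1 size_L1]] := extend v1 s1.
have [L2 [uniq_L2 peo_L2 size_L2]] := extend v2 s2.
exists (map (cons v1) L1 ++ map (cons v2) L2); split.
- rewrite cat_uniq !map_inj_uniq ?uniq_L1 ?uniq_L2 ?andbT //=; try by move=> ? ? [].
  apply/hasPn => _ /mapP[l2 _ ->]; apply/negP => /mapP[l1 _ [v21 _]].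
  by rewrite v21 eqxx in v12.
- by move=> l; rewrite mem_cat => /orP[] /mapP[l' L_l' ->]; [apply: peo_L1 | apply: peo_L2].
- by rewrite size_cat !size_map expnS mul2n -addnn leq_add.
Qed.

Lemma peo_seq_drop x0 (l : seq T) i : peo_seq l -> i < size l ->
  nbhd_clique [set z in drop i.+1 l] (nth x0 l i).
Proof.
elim: l i => [|v l IH] [|i] //=; first by case/andP; rewrite drop0.
by case/andP => _ peo_l; apply: IH.
Qed.

(* The junk value [1] is only taken when [l] does not enumerate ['I_n]. *)
Definition perm_of_seq (l : seq T) : {perm T} :=
  insubd (1%g : {perm T}) [ffun i => nth i l i].

Lemma perm_of_seqE (l : seq T) : uniq l -> size l = n ->
  forall i, perm_of_seq l i = nth i l i.
Proof.
move=> uniq_l size_l i.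
have inj : injectiveb [ffun i => nth i l i].
  apply/injectiveP => j k; rewrite !ffunE => nth_jk.
  apply/val_inj/eqP; rewrite -(nth_uniq j _ _ uniq_l) ?size_l ?ltn_ord //.
  by rewrite nth_jk (set_nth_default j) // size_l.
by rewrite -pvalE val_insubd inj ffunE.
Qed.

Lemma is_peo_perm_of_seq (l : seq T) : uniq l -> size l = n -> peo_seq l ->
  is_peo e (perm_of_seq l).
Proof.
move=> uniq_l size_l peo_l; apply/forallP => i; apply/forallP => j; apply/forallP => k.
apply/implyP => /and5P[lt_ij lt_ik j_ne_k].
rewrite !perm_of_seqE // !(set_nth_default i) ?size_l //.
have mem_drop m : i < m -> m < n -> nth i l m \in [set z in drop i.+1 l].
  move=> lt_im lt_mn; rewrite inE -(subnKC lt_im) -nth_drop.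
  by rewrite mem_nth // size_drop size_l ltn_sub2rE.
have lt_il : i < size l by rewrite size_l.
move/nbhd_cliqueP: (peo_seq_drop i peo_l lt_il) => cl e_ij e_ik.
by apply: cl e_ij e_ik _; rewrite ?mem_drop // nth_uniq ?size_l.
Qed.

Lemma num_peo_lower : 2 ^ n <= (num_peo e).*2.
Proof.
case: (posnP n) => [n0 | n_gt0].
  have peo_1 : is_peo e 1%g by apply/forallP => i; have := ltn_ord i; lia.
  have -> : 2 ^ n = 1 by rewrite n0.
  by rewrite double_gt0 card_gt0; apply/set0Pn; exists 1%g; rewrite inE.
have card_T : #|[set: T]| = n.-1.+1 by rewrite cardsT card_ord prednK.
have [L [uniq_L peo_L size_L]] := peo_seqs_of_card card_T.
have seq_L l : l \in L -> [/\ uniq l, size l = n & peo_seq l].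
  case/peo_L => uniq_l set_l peo_l; split => //.
  by rewrite -(card_uniqP uniq_l) -cardsE set_l cardsT card_ord.
have inj_L : {in L &, injective perm_of_seq}.
  move=> l1 l2 /seq_L[u1 s1 _] /seq_L[u2 s2 _] eq12.
  apply: (eq_from_nth (x0 := Ordinal n_gt0)) => [|m]; first by rewrite s1 s2.
  rewrite s1 => lt_mn.
  have := congr1 (fun s : {perm T} => s (Ordinal lt_mn)) eq12; rewrite !perm_of_seqE //=.
  by rewrite !(set_nth_default (Ordinal lt_mn)) ?s1 ?s2.
have : 2 ^ n.-1 <= num_peo e.
  apply: leq_trans size_L _; rewrite -(size_map perm_of_seq) /num_peo cardE.
  apply: uniq_leq_size; first by rewrite map_inj_in_uniq.
  move=> _ /mapP[l L_l ->]; rewrite mem_enum inE.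
  by have [uniq_l size_l peo_l] := seq_L l L_l; apply: is_peo_perm_of_seq.
have -> : 2 ^ n = (2 ^ n.-1).*2 by rewrite -mul2n -expnS prednK.
by rewrite leq_double.
Qed.

End Chordal.

Lemma INR_expn m k : INR (m ^ k) = pow (INR m) k.
Proof. by elim: k => // k IH; rewrite expnS mult_INR IH. Qed.

Theorem mainTheorem4 :
  exists c : R, Rlt 0 c /\
    forall (n : nat) (e : rel 'I_n),
      symmetric e -> irreflexive e -> chordal e ->
      Rle (Rmult c (pow 2 n)) (INR (num_peo e)).
Proof.
exists (Rinv 2); split; first lra.
move=> n e esym eirr ech.
have := le_INR _ _ (elimTF leP (num_peo_lower esym eirr ech)).
rewrite -mul2n mult_INR INR_expn.
change (INR 2) with (IZR 2) => ?; lra.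
Qed.
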